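(* Let $\lambda=2\cos(\pi/5)$, let $H_5$ be the subgroup of $SL(2,\mathbb R)$ generated by $S=\begin{pmatrix}0&1\\-1&0\end{pmatrix}$ and $T=\begin{pmatrix}1&\lambda\\0&1\end{pmatrix}$ (so $H_5\subseteq SL(2,\mathbb Z[\lambda])$), and let $A$ be a nonzero ideal of $\mathbb Z[\lambda]$. Then the natural reduction homomorphism $f: H_5\to SL(2,\mathbb Z[\lambda]/A)$ is surjective if and only if the absolute norm $N(A)=|\mathbb Z[\lambda]/A|$ is coprime to $6$.
   Context: $\lambda=2\cos(\pi/5)$ satisfies $\lambda^2=\lambda+1$; $\mathbb Z[\lambda]$ is the ring of integers of $\mathbb Q(\sqrt5)$. The map $f$ reduces each matrix entry modulo $A$. *)

From HB Require Import structures.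
From mathcomp Require Import all_boot all_order all_algebra.
From mathcomp Require Import reals trigo.
Set Implicit Arguments. Unset Strict Implicit. Unset Printing Implicit Defensive.
Import Order.TTheory GRing.Theory Num.Theory.
Local Open Scope ring_scope.

Section Defs.
Variable R : realType.

Definition lam : R := 2 * cos (pi / 5).

Definition inZl (x : R) : Prop := exists a b : int, x = a%:~R + b%:~R * lam.

Definition is_ideal (A : R -> Prop) : Prop :=
  [/\ forall x, A x -> inZl x,
      A 0,
      forall x y, A x -> A y -> A (x + y),
      forall x, A x -> A (- x)
    & forall r x, inZl r -> A x -> A (r * x)].

Definition nonzero_ideal (A : R -> Prop) : Prop := exists x, A x /\ x != 0.

Definition congr_mod (A : R -> Prop) (x y : R) : Prop := A (x - y).

(* N(A) = n : s is a complete system of n pairwise incongruent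
   representatives of Z[lambda]/A, i.e. |Z[lambda]/A| = n *)
Definition abs_norm_is (A : R -> Prop) (n : nat) : Prop :=
  exists s : seq R,
    [/\ size s = n,
        forall i, (i < n)%N -> inZl s`_i,
        forall i j, (i < n)%N -> (j < n)%N -> i != j -> ~ congr_mod A s`_i s`_j
      & forall x, inZl x -> exists2 i, (i < n)%N & congr_mod A x s`_i].

Definition Smx : 'M[R]_2 :=
  \matrix_(i, j) (if ((i : nat) == 0%N) && ((j : nat) == 1%N) then 1
                  else if ((i : nat) == 1%N) && ((j : nat) == 0%N) then -1
                  else 0).

Definition Tmx : 'M[R]_2 :=
  \matrix_(i, j) (if i == j then 1
                  else if ((i : nat) == 0%N) && ((j : nat) == 1%N) then lam
                  else 0).

Inductive H5 : 'M[R]_2 -> Prop :=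
  | H5_S : H5 Smx
  | H5_T : H5 Tmx
  | H5_mul : forall a b, H5 a -> H5 b -> H5 (a *m b)
  | H5_inv : forall a, H5 a -> H5 (invmx a).

(* the reduction map H_5 -> SL(2, Z[lambda]/A) is surjective: every matrix
   over Z[lambda] whose determinant is 1 mod A (i.e. every lift of an element
   of SL(2, Z[lambda]/A)) is entrywise congruent mod A to an element of H_5 *)
Definition reduction_surjective (A : R -> Prop) : Prop :=
  forall M : 'M[R]_2,
    (forall i j, inZl (M i j)) -> congr_mod A (\det M) 1 ->
    exists2 h, H5 h & forall i j, congr_mod A (h i j) (M i j).

End Defs.

From Pilot Require Import Defs.
From HB Require Import structures.
From mathcomp Require Import all_boot all_order all_algebra.
From mathcomp Require Import reals trigo.
From mathcomp Require Import ring lra zify.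
Set Implicit Arguments. Unset Strict Implicit. Unset Printing Implicit Defensive.
Import Order.TTheory GRing.Theory Num.Theory.
Local Open Scope ring_scope.

(* If N(A) = n is prime to 6 then, as n itself lies in A, 2 and 3 are units
   modulo A.  This allows to write a conjugate of a power of T by an element of
   H5 which, multiplied by a power of T, is congruent to the elementary matrix
   E12(1) modulo A; since Z[lambda] is norm-Euclidean, Euclid's algorithm applied
   to the lower-left entry then writes every matrix of determinant 1 modulo A as
   a product of elementary matrices and S^-1 modulo A.
   Conversely, 2 and 3 are inert in Z[lambda], and n divides m^2 for every
   integer m in A, so a prime p in {2, 3} dividing n forces A into p Z[lambda].
   A finite computation in SL(2, Z[lambda]/p) exhibits a set of matrices
   containing 1, stable under right multiplication by S, T and their inverses,
   and avoiding E12(1); hence E12(1) is not the reduction of any element of H5. *)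

(** * Arithmetic of Z[lambda] in coordinates *)

(* A pair (a, b) stands for a + b lambda, with lambda^2 = lambda + 1; zlconj is the
   Galois conjugation lambda |-> 1 - lambda. *)
Section Coordinates.
Variable K : comNzRingType.

Definition zlmul (x y : K * K) : K * K :=
  (x.1 * y.1 + x.2 * y.2, x.1 * y.2 + x.2 * y.1 + x.2 * y.2).

Definition zlconj (x : K * K) : K * K := (x.1 + x.2, - x.2).

Definition zlnorm (x : K * K) : K := x.1 * x.1 + x.1 * x.2 - x.2 * x.2.

Lemma zlmul_conj x : zlmul x (zlconj x) = (zlnorm x, 0).
Proof. by rewrite /zlmul /zlnorm /=; congr pair; ring. Qed.

Lemma zlnormN x : zlnorm (- x) = zlnorm x.
Proof. by rewrite /zlnorm /=; ring. Qed.

End Coordinates.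

Definition zlmap (K L : Type) (f : K -> L) (x : K * K) : L * L := (f x.1, f x.2).

Lemma zlnorm_map (K L : comNzRingType) (f : {rmorphism K -> L}) x :
  zlnorm (zlmap f x) = f (zlnorm x).
Proof. by rewrite /zlnorm /= rmorphB rmorphD !rmorphM. Qed.

Lemma nearest_multiple (x m : int) : 0 < m -> exists q, `|2 * (x - q * m)| <= m.
Proof.
move=> m_gt0; exists ((2 * x + m) %/ (2 * m))%Z.
have m2_gt0 : 0 < 2 * m by lia.
have := divz_eq (2 * x + m) (2 * m).
have := modz_ge0 (2 * x + m) (lt0r_neq0 m2_gt0).
have := ltz_pmod (2 * x + m) m2_gt0.
lia.
Qed.

Lemma zlnorm_small (e : int * int) (m : int) :
  `|2 * e.1| <= m -> `|2 * e.2| <= m -> `|zlnorm e| * 2 <= m * m.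
Proof.
case: e => x y /= hx hy; rewrite /zlnorm /=.
have p1 : 0 <= (m - 2 * x) * (m + 2 * x) by apply: mulr_ge0; lia.
have p2 : 0 <= (m - 2 * y) * (m + 2 * y) by apply: mulr_ge0; lia.
have p3 : 0 <= (m - 2 * x) * (m - 2 * y) by apply: mulr_ge0; lia.
have p4 : 0 <= (m + 2 * x) * (m + 2 * y) by apply: mulr_ge0; lia.
have p5 : 0 <= (m - 2 * x) * (m + 2 * y) by apply: mulr_ge0; lia.
have p6 : 0 <= (m + 2 * x) * (m - 2 * y) by apply: mulr_ge0; lia.
lia.
Qed.

(* Round the coordinates of a * conj(c) / N(c) to the nearest integers. *)
Lemma zlnorm_euclid (a c : int * int) : zlnorm c != 0 ->
  exists q, `|zlnorm (a - zlmul q c)| < `|zlnorm c|.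
Proof.
move=> Nc_neq0; set m := `|zlnorm c|.
have m_gt0 : 0 < m by rewrite normr_gt0.
set u := zlmul a (zlconj c).
have [q1 hq1] := nearest_multiple u.1 m_gt0.
have [q2 hq2] := nearest_multiple u.2 m_gt0.
pose sg : int := if 0 < zlnorm c then 1 else -1.
have sgN : sg * zlnorm c = m.
  rewrite /sg /m; case: (ltrP 0 (zlnorm c)) => h.
    by rewrite gtr0_norm // mul1r.
  by rewrite ler0_norm // mulN1r.
exists (sg * q1, sg * q2).
set e := (u.1 - q1 * m, u.2 - q2 * m).
have key : zlnorm (a - zlmul (sg * q1, sg * q2) c) * zlnorm c = zlnorm e.
  by rewrite /e /u -sgN /zlnorm /zlmul /zlconj /=; ring.
have := zlnorm_small (e := e) hq1 hq2.
rewrite -key normrM -/m ltNge => hb; apply/negP => hge.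
have : m * m * 2 <= `|zlnorm (a - zlmul (sg * q1, sg * q2) c)| * m * 2.
  by rewrite ler_pM2r // ler_pM2r.
nia.
Qed.

Lemma Fp_enum (p : nat) : prime p -> forall a : 'F_p, a \in [seq i%:R | i <- iota 0 p].
Proof.
move=> p_pr a; rewrite -[a]natr_Zp; apply: map_f.
rewrite mem_iota add0n; move: (nat_of_ord a) (ltn_ord a) => k.
by rewrite Fp_cast.
Qed.

(* 2 and 3 are inert in Z[lambda]. *)
Lemma zlnorm_Fp_eq0 (p : nat) (y : 'F_p * 'F_p) :
  p \in [:: 2; 3]%N -> (zlnorm y == 0) = (y == 0).
Proof.
have by_enum q (q_pr : prime q) : let F := [seq i%:R | i <- iota 0 q] : seq 'F_q in
    all (fun a => all (fun b => (zlnorm (a, b) == 0) == ((a, b) == 0)) F) F ->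
    forall y : 'F_q * 'F_q, (zlnorm y == 0) = (y == 0).
  move=> F /allP hF [a b].
  by have /eqP := allP (hF a (Fp_enum q_pr a)) b (Fp_enum q_pr b).
by rewrite !inE => /orP[] /eqP p_eq; move: y; rewrite p_eq; apply: by_enum => //; vm_compute.
Qed.

Lemma zlnorm_dvd (p : nat) (x : int * int) : p \in [:: 2; 3]%N ->
  (p %| zlnorm x)%Z -> (p %| x.1)%Z && (p %| x.2)%Z.
Proof.
move=> p23; have p_pr : prime p by move: p23; rewrite !inE => /orP[] /eqP ->.
rewrite !(dvdz_pcharf (pchar_Fp p_pr)) -(zlnorm_map (intr : int -> 'F_p)).
by rewrite zlnorm_Fp_eq0 // => /eqP [-> ->]; rewrite eqxx.
Qed.

(* Infinite descent: N(x) = 0 forces 2 | x, and then N(x / 2) = 0. *)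
Lemma zlnorm_eq0 (x : int * int) : (zlnorm x == 0) = (x == 0).
Proof.
apply/idP/idP => [|/eqP ->]; last by rewrite /zlnorm /= !mul0r subr0.
move: {2}(absz x.1 + absz x.2)%N (leqnn (absz x.1 + absz x.2)) => k.
elim: k x => [|k IHk] [a b] /= hk N0; first by apply/eqP; congr pair; lia.
have N0_dvd : (2 %| zlnorm (a, b))%Z by move/eqP: N0 => ->.
have /= /andP[/dvdzP[a' ea] /dvdzP[b' eb]] := zlnorm_dvd (p := 2) isT N0_dvd.
subst a b.
have N0' : zlnorm (a', b') == 0.
  by move: N0; rewrite /zlnorm /= => /eqP N0; apply/eqP; lia.
have [e|nz] := eqVneq (a', b') 0; first by move: e => [-> ->]; rewrite !mul0r.
have size_le : (absz a' + absz b' <= k)%N by move: nz hk; rewrite /= xpair_eqE; lia.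
by have /eqP [-> ->] := IHk (a', b') size_le N0'; rewrite !mul0r.
Qed.

(** * Z[lambda] inside R *)

Section Zlambda.
Variable R : realType.
Local Notation lam := (lam R).

(* cos (3 pi / 5) = - cos (2 pi / 5) gives (c + 1) (4 c^2 - 2 c - 1) = 0. *)
Lemma lam_sqr : lam * lam = lam + 1.
Proof.
pose x : R := pi / 5; pose c := cos x.
have c_gt0 : 0 < c.
  by apply: cos_gt0_pihalf; have := pi_gt0 R; rewrite /x; lra.
have cos3x : cos (x *+ 2 + x) = - cos (x *+ 2).
  have -> : x *+ 2 + x = pi - x *+ 2 by rewrite /x; field.
  by rewrite cosB cospi sinpi; ring.
have : (c + 1) * (4 * c ^+ 2 - 2 * c - 1) = 0.
  move: cos3x; rewrite cosD cos_mulr2n sin_mulr2n -/c => e.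
  have s2 := sin2cos2 x; rewrite -/c in s2.
  have -> : (c + 1) * (4 * c ^+ 2 - 2 * c - 1) =
    ((c ^+ 2 *+ 2 - 1) * c - (c * sin x) *+ 2 * sin x + (c ^+ 2 *+ 2 - 1))
    + 2 * c * (sin x ^+ 2 - (1 - c ^+ 2)) by rewrite !mulr2n; ring.
  by rewrite e s2 addNr subrr mulr0 addr0.
move/eqP; rewrite mulf_eq0 => /orP[|/eqP h]; first by rewrite addr_eq0 => /eqP; lra.
by rewrite /Defs.lam -/x -/c; lra.
Qed.

Definition zl (x : int * int) : R := x.1%:~R + x.2%:~R * lam.

Lemma zl0 : zl 0 = 0.
Proof. by rewrite /zl /= mul0r addr0. Qed.

Lemma zlD x y : zl (x + y) = zl x + zl y.
Proof. by rewrite /zl /= !intrD; ring. Qed.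

Lemma zlN x : zl (- x) = - zl x.
Proof. by rewrite /zl /= !intrN; ring. Qed.

Lemma zlB x y : zl (x - y) = zl x - zl y.
Proof. by rewrite zlD zlN. Qed.

Lemma zlM x y : zl (zlmul x y) = zl x * zl y.
Proof. by rewrite /zl /= !(intrD, intrM); ring: lam_sqr. Qed.

Lemma zl_norm x : zl x * zl (zlconj x) = (zlnorm x)%:~R.
Proof. by rewrite -zlM zlmul_conj /zl /= mul0r addr0. Qed.

Lemma inZlP (y : R) : inZl y <-> exists x, y = zl x.
Proof. by split=> [[a [b ->]]|[[a b] ->]]; [exists (a, b) | exists a, b]. Qed.

Lemma inZl_zl x : inZl (zl x). Proof. by apply/inZlP; exists x. Qed.

Lemma inZl_int (k : int) : inZl (k%:~R : R).
Proof. by exists k, 0; rewrite mul0r addr0. Qed.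

Lemma inZl_nat (k : nat) : inZl (k%:R : R). Proof. exact: (inZl_int k). Qed.

Lemma inZl0 : inZl (0 : R). Proof. exact: (inZl_int 0). Qed.

Lemma inZl1 : inZl (1 : R). Proof. exact: (inZl_int 1). Qed.

Lemma inZl_lam : inZl lam. Proof. by exists 0, 1; rewrite mul1r add0r. Qed.

Lemma inZl_add (x y : R) : inZl x -> inZl y -> inZl (x + y).
Proof. by move=> /inZlP[u ->] /inZlP[v ->]; rewrite -zlD; apply: inZl_zl. Qed.

Lemma inZl_opp (x : R) : inZl x -> inZl (- x).
Proof. by move=> /inZlP[u ->]; rewrite -zlN; apply: inZl_zl. Qed.

Lemma inZl_mul (x y : R) : inZl x -> inZl y -> inZl (x * y).
Proof. by move=> /inZlP[u ->] /inZlP[v ->]; rewrite -zlM; apply: inZl_zl. Qed.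

End Zlambda.

Ltac inZl_closure := repeat first
  [ assumption | apply: inZl0 | apply: inZl1 | apply: inZl_lam | apply: inZl_nat
  | apply: inZl_int | apply: inZl_zl | apply: inZl_add | apply: inZl_opp
  | apply: inZl_mul ].

(** * 2 x 2 matrices and the group H5 *)

Section Matrices2.
Variable K : comUnitRingType.

Definition mx2 (a b c d : K) : 'M[K]_2 :=
  \matrix_(i, j) if (i : nat) == 0%N then (if (j : nat) == 0%N then a else b)
                 else (if (j : nat) == 0%N then c else d).

Lemma mx2E (M : 'M[K]_2) : M = mx2 (M 0 0) (M 0 1) (M 1 0) (M 1 1).
Proof.
apply/matrixP => i j; rewrite mxE.
by case: i => -[|[|//]] ?; case: j => -[|[|//]] ? /=; congr (M _ _); apply: val_inj.
Qed.

Lemma mx2_entry (P : K -> Prop) a b c d :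
  P a -> P b -> P c -> P d -> forall i j, P (mx2 a b c d i j).
Proof.
by move=> Pa Pb Pc Pd i j; rewrite mxE; case: i => -[|[|//]] ?; case: j => -[|[|//]] ?.
Qed.

Lemma mx2_entryB (P : K -> Prop) a b c d a' b' c' d' :
  P (a - a') -> P (b - b') -> P (c - c') -> P (d - d') ->
  forall i j, P (mx2 a b c d i j - mx2 a' b' c' d' i j).
Proof.
by move=> Pa Pb Pc Pd i j; rewrite !mxE; case: i => -[|[|//]] ?; case: j => -[|[|//]] ?.
Qed.

Lemma mx2_00 a b c d : mx2 a b c d 0 0 = a. Proof. by rewrite mxE. Qed.
Lemma mx2_01 a b c d : mx2 a b c d 0 1 = b. Proof. by rewrite mxE. Qed.
Lemma mx2_10 a b c d : mx2 a b c d 1 0 = c. Proof. by rewrite mxE. Qed.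
Lemma mx2_11 a b c d : mx2 a b c d 1 1 = d. Proof. by rewrite mxE. Qed.

Lemma mul_mx2 a b c d a' b' c' d' :
  mx2 a b c d *m mx2 a' b' c' d' =
  mx2 (a * a' + b * c') (a * b' + b * d') (c * a' + d * c') (c * b' + d * d').
Proof.
apply/matrixP => i j; rewrite !mxE !big_ord_recr big_ord0 /= add0r !mxE.
by case: i => -[|[|//]] ?; case: j => -[|[|//]] ?.
Qed.

Lemma det_mx2 a b c d : \det (mx2 a b c d) = a * d - b * c.
Proof.
rewrite (expand_det_row _ 0) !big_ord_recr big_ord0 /= add0r.
by rewrite /cofactor !det_mx11 !mxE /= expr0 expr1; ring.
Qed.

Lemma invmx_mx2 a b c d : a * d - b * c = 1 -> invmx (mx2 a b c d) = mx2 d (- b) (- c) a.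
Proof.
move=> det1.
have unit_mx : mx2 a b c d \in unitmx by rewrite unitmxE det_mx2 det1 unitr1.
have : mx2 a b c d *m mx2 d (- b) (- c) a = 1%:M.
  by rewrite mul_mx2 [RHS]mx2E !mxE /=; congr mx2; rewrite -?det1; ring.
by move/(congr1 (mulmx (invmx (mx2 a b c d)))); rewrite mulmxA mulVmx // mul1mx mulmx1.
Qed.

End Matrices2.

Section H5.
Variable R : realType.
Local Notation lam := (lam R).
Local Notation H5 := (@H5 R).

Definition E12 (x : R) := mx2 1 x 0 1.
Definition E21 (x : R) := mx2 1 0 x 1.

Lemma Smx_mx2 : Smx R = mx2 0 1 (-1) 0.
Proof. by rewrite [LHS]mx2E !mxE. Qed.

Lemma Tmx_mx2 : Tmx R = E12 lam.
Proof. by rewrite [LHS]mx2E !mxE. Qed.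

Lemma H5_SL2 h : H5 h -> (forall i j, inZl (h i j)) /\ \det h = 1.
Proof.
elim=> [||a b _ [Za deta] _ [Zb detb]|a _ [Za deta]].
- by rewrite Smx_mx2 det_mx2; split; [apply: mx2_entry; inZl_closure | ring].
- by rewrite Tmx_mx2 det_mx2; split; [apply: mx2_entry; inZl_closure | ring].
- split; last by rewrite det_mulmx deta detb mulr1.
  move: (Za 0 0) (Za 0 1) (Za 1 0) (Za 1 1) (Zb 0 0) (Zb 0 1) (Zb 1 0) (Zb 1 1) => *.
  by rewrite (mx2E a) (mx2E b) mul_mx2; apply: mx2_entry; inZl_closure.
- split; last by rewrite det_inv deta invr1.
  move: (Za 0 0) (Za 0 1) (Za 1 0) (Za 1 1) deta => *.
  rewrite (mx2E a) invmx_mx2; last by rewrite -det_mx2 -mx2E.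
  by apply: mx2_entry; inZl_closure.
Qed.

Lemma H5_Sinv : H5 (mx2 0 (-1) 1 0).
Proof.
have -> : mx2 0 (-1) 1 0 = invmx (Smx R).
  by rewrite Smx_mx2 invmx_mx2; [congr mx2 | ]; ring.
exact/H5_inv/H5_S.
Qed.

Lemma H5_E12_0 : H5 (E12 0).
Proof.
have -> : E12 0 = Smx R *m mx2 0 (-1) 1 0 by rewrite Smx_mx2 mul_mx2; congr mx2; ring.
exact: H5_mul (H5_S R) H5_Sinv.
Qed.

Lemma E12D x y : E12 x *m E12 y = E12 (x + y).
Proof. by rewrite mul_mx2; congr mx2; ring. Qed.

Lemma invmx_E12 x : invmx (E12 x) = E12 (- x).
Proof. by rewrite invmx_mx2 ?oppr0 //; ring. Qed.

Lemma H5_E12_lam (k : int) : H5 (E12 (k%:~R * lam)).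
Proof.
have H5_nat (m : nat) : H5 (E12 (m%:R * lam)).
  elim: m => [|m IHm]; first by rewrite mul0r; apply: H5_E12_0.
  by rewrite mulrSr mulrDl mul1r -E12D -Tmx_mx2; apply: H5_mul IHm (H5_T R).
case: k => m; first exact: H5_nat.
by rewrite NegzE intrN mulNr -invmx_E12; apply/H5_inv/H5_nat.
Qed.

Lemma H5_E21_lam (k : int) : H5 (E21 (k%:~R * lam)).
Proof.
have -> : E21 (k%:~R * lam) = Smx R *m E12 (- (k%:~R * lam)) *m mx2 0 (-1) 1 0.
  by rewrite Smx_mx2 !mul_mx2; congr mx2; ring.
apply: H5_mul H5_Sinv; apply: H5_mul (H5_S R) _.
by rewrite -mulNr -intrN; apply: H5_E12_lam.
Qed.

Lemma H5_STSTTST : H5 (mx2 (2 * lam) (1 + 2 * lam) (-1 - 2 * lam) (-2 - 2 * lam)).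
Proof.
have -> : mx2 (2 * lam) (1 + 2 * lam) (-1 - 2 * lam) (-2 - 2 * lam) =
    Smx R *m Tmx R *m Smx R *m Tmx R *m Tmx R *m Smx R *m Tmx R.
  by rewrite Smx_mx2 Tmx_mx2 !mul_mx2; congr mx2; ring: (lam_sqr R).
by repeat apply: H5_mul; (apply: H5_S || apply: H5_T).
Qed.

End H5.

(** * Lifting matrices modulo A to H5 *)

Section Reachable.
Variables (R : realType) (A : R -> Prop).
Hypothesis A_ideal : is_ideal A.
Local Notation lam := (lam R).
Local Notation zl := (zl R).

Lemma ideal0 : A 0. Proof. by case: A_ideal. Qed.

Lemma idealD x y : A x -> A y -> A (x + y).
Proof. by case: A_ideal => _ _ + _ _; apply. Qed.

Lemma idealN x : A x -> A (- x). Proof. by case: A_ideal => _ _ _ + _; apply. Qed.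

Lemma idealB x y : A x -> A y -> A (x - y).
Proof. by move=> Ax Ay; apply/idealD/idealN. Qed.

Lemma idealMl r x : inZl r -> A x -> A (r * x).
Proof. by case: A_ideal => _ _ _ _; apply. Qed.

Lemma idealMr r x : inZl r -> A x -> A (x * r).
Proof. by rewrite mulrC; apply: idealMl. Qed.

Lemma ideal_eq x y : A x -> x = y -> A y. Proof. by move=> + <-. Qed.

Lemma ideal_mul_eq r x y : inZl r -> A x -> r * x = y -> A y.
Proof. by move=> Zr Ax <-; apply: idealMl. Qed.

Lemma ideal_sum n (F : 'I_n -> R) : (forall i, A (F i)) -> A (\sum_i F i).
Proof. by move=> AF; apply: (big_ind A) => //; [apply: ideal0 | apply: idealD]. Qed.

Lemma unit_mod_of_coprime (q m : nat) : A m%:R -> coprime q m ->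
  exists u : int, A (q%:R * u%:~R - 1).
Proof.
move=> Am /(@coprimezP q m) [[u v] /= uv1]; exists u.
apply: ideal_mul_eq (inZl_int R (- v)) Am _.
have := congr1 (intr : int -> R) uv1; rewrite intrD !intrM -!pmulrn rmorph1 => e.
transitivity (q%:R * u%:~R - (u%:~R * q%:R + v%:~R * m%:R) : R).
  by rewrite intrN; ring.
by rewrite e.
Qed.

Definition reachable (M : 'M[R]_2) :=
  exists2 h, H5 h & forall i j, congr_mod A (h i j) (M i j).

Lemma reachable_congr (M M' : 'M[R]_2) :
  reachable M -> (forall i j, A (M i j - M' i j)) -> reachable M'.
Proof.
move=> [h Hh hM] MM'; exists h => // i j.
by apply: ideal_eq (idealD (hM i j) (MM' i j)) _; rewrite addrA subrK.
Qed.

Lemma reachable_H5 h : H5 h -> reachable h.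
Proof. by exists h => // i j; rewrite /congr_mod subrr; apply: ideal0. Qed.

Lemma reachable_mul (M N : 'M[R]_2) :
  (forall i j, inZl (M i j)) -> reachable M -> reachable N -> reachable (M *m N).
Proof.
move=> ZM [h Hh hM] [h' Hh' hN]; exists (h *m h'); first exact: H5_mul.
move=> i j; have [Zh' _] := H5_SL2 Hh'; rewrite /congr_mod.
have -> : (h *m h') i j - (M *m N) i j =
    \sum_k ((h i k - M i k) * h' k j + M i k * (h' k j - N k j)).
  by rewrite !mxE -sumrB; apply: eq_bigr => k _; ring.
apply: ideal_sum => k; apply: idealD.
  exact: idealMr (Zh' k j) (hM i k).
exact: idealMl (ZM i k) (hN k j).
Qed.

Lemma reachable_adj a b c d : reachable (mx2 a b c d) -> reachable (mx2 d (- b) (- c) a).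
Proof.
move=> [h Hh hM]; exists (invmx h); first exact: H5_inv.
have [_] := H5_SL2 Hh; rewrite [h]mx2E det_mx2 => /invmx_mx2 ->.
move: (hM 0 0) (hM 0 1) (hM 1 0) (hM 1 1); rewrite /congr_mod !mxE /= => h00 h01 h10 h11.
by apply: mx2_entryB => //; rewrite -opprD; apply: idealN.
Qed.

(* Using 2 U = 1 and 3 V = 1 modulo A, the element Y = S T S T T S T E21(-U lambda)
   of H5 is upper triangular modulo A with upper-left entry (lambda - 2) / 2, so
   Y E12(-4 V lambda) Y^-1 is congruent to E12(-V lambda (lambda - 2)^2), which is
   E12(3 V - 2 V lambda); multiplying by E12(2 V lambda) gives E12(3 V) = E12(1). *)
Lemma reachable_E12_1 (u v : int) :
  A (2 * u%:~R - 1) -> A (3 * v%:~R - 1) -> reachable (E12 1).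
Proof.
move=> Au Av; set U : R := u%:~R in Au; set V : R := v%:~R in Av.
pose z := (- u)%:~R * lam.
pose p := 2 * lam + (1 + 2 * lam) * z; pose q := 1 + 2 * lam.
pose r := -1 - 2 * lam + (-2 - 2 * lam) * z; pose s := -2 - 2 * lam.
have HY : H5 (mx2 p q r s).
  have -> : mx2 p q r s = mx2 (2 * lam) q (-1 - 2 * lam) s *m E21 z.
    by rewrite /p /q /r /s mul_mx2; congr mx2; ring.
  exact: H5_mul (H5_STSTTST R) (H5_E21_lam R (- u)).
have detY : p * s = q * r + 1.
  by have [_] := H5_SL2 HY; rewrite det_mx2 => <-; ring.
pose x := (-4 * v)%:~R * lam; pose w := (2 * v)%:~R * lam.
have HG : H5 (mx2 p q r s *m E12 x *m invmx (mx2 p q r s) *m E12 w).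
  by apply/H5_mul/H5_E12_lam/H5_mul/H5_inv/HY/H5_mul/H5_E12_lam/HY.
have [Zp Zr Zx Zw] : [/\ inZl p, inZl r, inZl x & inZl w].
  by split; rewrite /p /r /x /w /z; inZl_closure.
have Ar : A r.
  apply: (ideal_mul_eq (r := 2 * lam + 1)) Au _; first by inZl_closure.
  by rewrite /r /z /U intrN; ring: (lam_sqr R).
have Ap : A (2 * p - lam + 2).
  apply: (ideal_mul_eq (r := - (3 * lam + 2))) Au _; first by inZl_closure.
  by rewrite /p /z /U intrN; ring: (lam_sqr R).
have Axw : A (x * p * p + w - 1).
  have Zk : inZl (lam * V * (2 * p + lam - 2)) by rewrite /V; inZl_closure.
  apply: ideal_eq (idealB Av (idealMl Zk Ap)) _.
  by rewrite /x /w /V !intrM; ring: (lam_sqr R).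
apply: reachable_congr (reachable_H5 HG) _.
rewrite invmx_mx2; last by rewrite detY; ring.
rewrite /E12 !mul_mx2; apply: mx2_entryB.
- apply: (ideal_mul_eq (r := - (x * p))) Ar _; first by inZl_closure.
  by ring: detY.
- have Zxpw : inZl (- (x * p * w)) by inZl_closure.
  by apply: ideal_eq (idealD (idealMl Zxpw Ar) Axw) _; ring: detY.
- apply: (ideal_mul_eq (r := - (x * r))) Ar _; first by inZl_closure.
  by ring: detY.
- apply: (ideal_mul_eq (r := x * p - x * r * w)) Ar _; first by inZl_closure.
  by ring: detY.
Qed.

Section Generation.
Hypothesis E12_1_reachable : reachable (E12 1).

Lemma reachable_E12_int (k : int) : reachable (E12 k%:~R).
Proof.
have reachable_nat (m : nat) : reachable (E12 m%:R).
  elim: m => [|m IHm]; first exact/reachable_H5/H5_E12_0.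
  rewrite -addn1 natrD -E12D; apply: reachable_mul => //.
  by apply: mx2_entry; inZl_closure.
case: k => m; first exact: reachable_nat.
by have := reachable_adj (reachable_nat m.+1); rewrite NegzE intrN oppr0.
Qed.

Lemma reachable_E12 x : inZl x -> reachable (E12 x).
Proof.
move=> [a [b ->]]; rewrite -E12D; apply: reachable_mul.
- by apply: mx2_entry; inZl_closure.
- exact: reachable_E12_int.
- exact/reachable_H5/H5_E12_lam.
Qed.

Lemma reachable_Sinv : reachable (mx2 0 (-1) 1 0).
Proof. exact/reachable_H5/H5_Sinv. Qed.

Lemma reachable_E21 y : inZl y -> reachable (E21 y).
Proof.
move=> Zy; have -> : E21 y = mx2 0 (-1) 1 0 *m E12 (- y) *m Smx R.
  by rewrite Smx_mx2 !mul_mx2; congr mx2; ring.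
apply: reachable_mul (reachable_H5 (H5_S R)).
  by rewrite mul_mx2; apply: mx2_entry; inZl_closure.
apply: reachable_mul reachable_Sinv _; first by apply: mx2_entry; inZl_closure.
by apply: reachable_E12; inZl_closure.
Qed.

Lemma reachable_diag a d : inZl a -> inZl d -> A (a * d - 1) -> reachable (mx2 a 0 0 d).
Proof.
move=> Za Zd Aad.
have : reachable (E12 a *m E21 (- d) *m E12 a *m mx2 0 (-1) 1 0).
  apply: reachable_mul reachable_Sinv.
    by rewrite !mul_mx2; apply: mx2_entry; inZl_closure.
  apply: reachable_mul (reachable_E12 Za).
    by rewrite !mul_mx2; apply: mx2_entry; inZl_closure.
  apply: reachable_mul (reachable_E12 Za) _; first by apply: mx2_entry; inZl_closure.
  by apply: reachable_E21; inZl_closure.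
move/reachable_congr; apply; rewrite !mul_mx2; apply: mx2_entryB.
- by apply: (ideal_mul_eq (r := - a)) Aad _; [inZl_closure | ring].
- by apply: (ideal_mul_eq (r := 1)) Aad _; [inZl_closure | ring].
- by apply: (ideal_mul_eq (r := - 1)) Aad _; [inZl_closure | ring].
- by apply: ideal_eq ideal0 _; ring.
Qed.

Lemma reachable_triu a b d : inZl a -> inZl b -> inZl d -> A (a * d - 1) ->
  reachable (mx2 a b 0 d).
Proof.
move=> Za Zb Zd Aad.
have : reachable (mx2 a 0 0 d *m E12 (d * b)).
  apply: reachable_mul (reachable_diag Za Zd Aad) _; first by apply: mx2_entry; inZl_closure.
  by apply: reachable_E12; inZl_closure.
move/reachable_congr; apply; rewrite mul_mx2; apply: mx2_entryB.
- by apply: ideal_eq ideal0 _; ring.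
- by apply: (ideal_mul_eq (r := b)) Aad _; [inZl_closure | ring].
- by apply: ideal_eq ideal0 _; ring.
- by apply: ideal_eq ideal0 _; ring.
Qed.

(* Euclid's algorithm on the lower-left entry c: with a = q c + r and N(r) < N(c),
   [a b; c d] = E12(q) S^-1 [c d; -r (q d - b)]. *)
Lemma reachable_SL2 a b c d : inZl a -> inZl b -> inZl c -> inZl d ->
  A (a * d - b * c - 1) -> reachable (mx2 a b c d).
Proof.
move=> Za Zb /inZlP[g ->] Zd.
move: {2}(absz (zlnorm g)).+1 (ltnSn (absz (zlnorm g))) => k.
elim: k => // k IHk in a b d g Za Zb Zd *; rewrite ltnS => Ng_le Adet.
have [g0|g_neq0] := eqVneq g 0.
  rewrite g0 zl0 in Adet *; apply: reachable_triu => //.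
  by apply: ideal_eq Adet _; ring.
have /inZlP[f ef] := Za; rewrite ef in Adet *.
have Ng_neq0 : zlnorm g != 0 by rewrite zlnorm_eq0.
have [q Nr_lt] := zlnorm_euclid f Ng_neq0.
have -> : mx2 (zl f) b (zl g) d =
    E12 (zl q) *m mx2 0 (-1) 1 0 *m mx2 (zl g) d (zl (- (f - zlmul q g))) (zl q * d - b).
  by rewrite zlN zlB zlM !mul_mx2; congr mx2; ring.
apply: reachable_mul.
- by rewrite mul_mx2; apply: mx2_entry; inZl_closure.
- apply: reachable_mul reachable_Sinv.
    by apply: mx2_entry; inZl_closure.
  exact/reachable_E12/inZl_zl.
apply: (IHk (zl g) d (zl q * d - b) (- (f - zlmul q g))); try by inZl_closure.
  by rewrite zlnormN; apply: leq_trans Ng_le; rewrite -ltz_nat !abszE.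
by apply: ideal_eq Adet _; rewrite zlN zlB zlM; ring.
Qed.

End Generation.
End Reachable.

(** * Reduction modulo 2 and 3 *)

Section ZlMatrices.
Variable K : comNzRingType.

(* 2 x 2 matrices over K[lambda] in coordinates, listed row by row. *)
Definition zlmx := ((K * K) * (K * K) * (K * K) * (K * K))%type.

Definition zlmx_mul (X Y : zlmx) : zlmx :=
  let: (a, b, c, d) := X in let: (a', b', c', d') := Y in
  (zlmul a a' + zlmul b c', zlmul a b' + zlmul b d',
   zlmul c a' + zlmul d c', zlmul c b' + zlmul d d').

Definition zlmx_adj (X : zlmx) : zlmx := let: (a, b, c, d) := X in (d, - b, - c, a).

Definition zlmx1 : zlmx := ((1, 0), (0, 0), (0, 0), (1, 0)).

Ltac zlmx_ring :=
  rewrite /zlmx_mul /zlmx_adj /zlmx1 /zlmul /=;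
  repeat (apply: (congr2 pair)); simpl; ring.

Lemma zlmx_mulA : associative zlmx_mul.
Proof.
by move=> [[[[? ?] [? ?]] [? ?]] [? ?]] [[[[? ?] [? ?]] [? ?]] [? ?]]
  [[[[? ?] [? ?]] [? ?]] [? ?]]; zlmx_ring.
Qed.

Lemma zlmx_mul1 : left_id zlmx1 zlmx_mul.
Proof. by move=> [[[[? ?] [? ?]] [? ?]] [? ?]]; zlmx_ring. Qed.

Lemma zlmx_adjK : involutive zlmx_adj.
Proof. by move=> [[[[? ?] [? ?]] [? ?]] [? ?]]; zlmx_ring. Qed.

Lemma zlmx_adjM X Y : zlmx_adj (zlmx_mul X Y) = zlmx_mul (zlmx_adj Y) (zlmx_adj X).
Proof.
by move: X Y => [[[[? ?] [? ?]] [? ?]] [? ?]] [[[[? ?] [? ?]] [? ?]] [? ?]]; zlmx_ring.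
Qed.

Definition stable (D : seq zlmx) (Y : zlmx) := all (fun d => zlmx_mul d Y \in D) D.

Lemma stable_mul D Y Y' : stable D Y -> stable D Y' -> stable D (zlmx_mul Y Y').
Proof.
move=> /allP DY /allP DY'; apply/allP => d Dd.
by rewrite zlmx_mulA; apply/DY'/DY.
Qed.

(* Only the properties of the result are ever used, so this closure procedure
   needs no correctness proof. *)
Fixpoint zlmx_orbit (gens : seq zlmx) (fuel : nat) (D : seq zlmx) : seq zlmx :=
  if fuel is fuel'.+1 then
    let D' := undup (D ++ [seq zlmx_mul d g | d <- D, g <- gens]) in
    if size D' == size D then D else zlmx_orbit gens fuel' D'
  else D.

End ZlMatrices.

Section ZlMap.
Variables (K L : comNzRingType) (f : {rmorphism K -> L}).

Definition zlmx_map (X : zlmx K) : zlmx L :=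
  let: (a, b, c, d) := X in (zlmap f a, zlmap f b, zlmap f c, zlmap f d).

Lemma zlmap_mul x y : zlmap f (zlmul x y) = zlmul (zlmap f x) (zlmap f y).
Proof. by rewrite /zlmap /zlmul /= !rmorphD !rmorphM. Qed.

Lemma zlmap_add x y : zlmap f (x + y) = zlmap f x + zlmap f y.
Proof. by rewrite /zlmap /= !rmorphD. Qed.

Lemma zlmap_sub x y : zlmap f (x - y) = zlmap f x - zlmap f y.
Proof. by rewrite /zlmap /= !rmorphB. Qed.

Lemma zlmx_map_mul X Y : zlmx_map (zlmx_mul X Y) = zlmx_mul (zlmx_map X) (zlmx_map Y).
Proof.
by move: X Y => [[[a b] c] d] [[[a' b'] c'] d']; rewrite /= !zlmap_add !zlmap_mul.
Qed.

End ZlMap.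

Section ToMatrix.
Variable R : realType.
Local Notation zl := (zl R).

Definition toM (X : zlmx int) : 'M[R]_2 :=
  let: (a, b, c, d) := X in mx2 (zl a) (zl b) (zl c) (zl d).

Lemma toM_mul X Y : toM (zlmx_mul X Y) = toM X *m toM Y.
Proof.
by move: X Y => [[[a b] c] d] [[[a' b'] c'] d']; rewrite /= mul_mx2 !zlD !zlM.
Qed.

Lemma invmx_toM X : \det (toM X) = 1 -> invmx (toM X) = toM (zlmx_adj X).
Proof. by move: X => [[[a b] c] d]; rewrite /= det_mx2 => /invmx_mx2 ->; rewrite !zlN. Qed.

Definition Szl : zlmx int := ((0, 0), (1, 0), (-1, 0), (0, 0)).
Definition Tzl : zlmx int := ((1, 0), (0, 1), (0, 0), (1, 0)).
Definition E12zl : zlmx int := ((1, 0), (1, 0), (0, 0), (1, 0)).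

Lemma toM_S : toM Szl = Smx R.
Proof. by rewrite Smx_mx2 /= /zl /=; congr mx2; ring. Qed.

Lemma toM_T : toM Tzl = Tmx R.
Proof. by rewrite Tmx_mx2 /= /zl /=; congr mx2; ring. Qed.

Lemma toM_E12 : toM E12zl = E12 1.
Proof. by rewrite /= /zl /=; congr mx2; ring. Qed.

End ToMatrix.

Definition H5_mod_separating (p : nat) (D : seq (zlmx 'F_p)) :=
  let red := zlmx_map (intr : int -> 'F_p) in
  [&& zlmx1 _ \in D, stable D (red Szl) && stable D (red (zlmx_adj Szl)),
      stable D (red Tzl) && stable D (red (zlmx_adj Tzl)) & red E12zl \notin D].

Lemma H5_mod_separating_exists p :
  p \in [:: 2; 3]%N -> exists D : seq (zlmx 'F_p), H5_mod_separating D.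
Proof.
move=> p23; exists (zlmx_orbit [:: zlmx_map intr Szl; zlmx_map intr Tzl] 100 [:: zlmx1 'F_p]).
by move: p23; rewrite !inE => /orP[] /eqP ->; vm_compute.
Qed.

Section Separation.
Variables (R : realType) (p : nat) (D : seq (zlmx 'F_p)).
Local Notation red := (zlmx_map (intr : int -> 'F_p)).
Hypothesis D_separating : H5_mod_separating D.

Lemma H5_mod_stable h : H5 h -> exists X,
  [/\ h = toM R X, stable D (red X) & stable D (red (zlmx_adj X))].
Proof.
case/and4P: D_separating => _ /andP[SS SSa] /andP[ST STa] _.
elim=> [||a b _ [X [-> X1 X2]] _ [Y [-> Y1 Y2]]|a Ha [X [ea X1 X2]]].
- by exists Szl; split; [rewrite toM_S | exact: SS | exact: SSa].
- by exists Tzl; split; [rewrite toM_T | exact: ST | exact: STa].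
- exists (zlmx_mul X Y); rewrite toM_mul zlmx_adjM !zlmx_map_mul.
  by split; [| exact: stable_mul X1 Y1 | exact: stable_mul Y2 X2].
- exists (zlmx_adj X); rewrite zlmx_adjK; split; [| exact: X2 | exact: X1].
  by have [_] := H5_SL2 Ha; rewrite ea => /invmx_toM.
Qed.

Lemma E12_1_unreachable (A : R -> Prop) :
  (forall c, A (zl R c) -> zlmap intr c = 0 :> 'F_p * 'F_p) -> ~ reachable A (E12 1).
Proof.
move=> A_p [h Hh hE].
have red_eq c c' : A (zl R c - zl R c') -> zlmap intr c = zlmap intr c' :> 'F_p * 'F_p.
  by rewrite -zlB => /A_p; rewrite zlmap_sub => /eqP; rewrite subr_eq0 => /eqP.
have [[[[a b] c] d] [hX stX _]] := H5_mod_stable Hh.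
have redX : red (a, b, c, d) = red E12zl.
  move: (hE 0 0) (hE 0 1) (hE 1 0) (hE 1 1); rewrite hX -toM_E12 /congr_mod /=.
  rewrite !mx2_00 !mx2_01 !mx2_10 !mx2_11 => /red_eq ea /red_eq eb /red_eq ec /red_eq ed.
  by rewrite /= ea eb ec ed.
case/and4P: D_separating => one _ _ /negP; apply; rewrite -redX.
by move/allP: stX => /(_ _ one); rewrite zlmx_mul1.
Qed.

End Separation.

(** * The index of A *)

(* s lists representatives of the n classes of Z[lambda] modulo A; cls x is the
   position of the class of x (junk outside Z[lambda]). *)
Section Index.
Variables (R : realType) (A : R -> Prop) (n : nat) (s : seq R).
Hypothesis A_ideal : is_ideal A.
Hypothesis s_int : forall i, (i < n)%N -> inZl s`_i.
Hypothesis s_incongr :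
  forall i j, (i < n)%N -> (j < n)%N -> i != j -> ~ congr_mod A s`_i s`_j.
Hypothesis s_cover : forall x, inZl x -> exists2 i, (i < n)%N & congr_mod A x s`_i.
Local Notation lam := (lam R).

Lemma ex_class x : exists i, inZl x -> (i < n)%N /\ A (x - s`_i).
Proof.
case: (boolp.pselect (inZl x)) => [/s_cover[i lt_in Ax]|nZx]; last by exists 0%N.
by exists i.
Qed.

Definition cls : R -> nat := projT1 (boolp.choice ex_class).

Lemma clsP x : inZl x -> (cls x < n)%N /\ A (x - s`_(cls x)).
Proof. exact: projT2 (boolp.choice ex_class) x. Qed.

Lemma rep_inj i j : (i < n)%N -> (j < n)%N -> A (s`_i - s`_j) -> i = j.
Proof. by move=> lt_in lt_jn Aij; apply/eqP/negP => /negP/(s_incongr lt_in lt_jn). Qed.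

Lemma cls_eq x y : inZl x -> inZl y -> cls x = cls y <-> A (x - y).
Proof.
move=> Zx Zy; have [lt_x Ax] := clsP Zx; have [lt_y Ay] := clsP Zy.
split=> [exy|Axy].
  by apply: ideal_eq (idealB A_ideal Ax Ay) _; rewrite exy; ring.
apply: rep_inj => //; apply: ideal_eq (idealD A_ideal (idealB A_ideal Axy Ax) Ay) _; ring.
Qed.

Lemma cls_rep i : (i < n)%N -> cls s`_i = i.
Proof.
move=> lt_in; have [lt_c Ac] := clsP (s_int lt_in).
by apply: rep_inj => //; rewrite -opprB; apply: (idealN A_ideal).
Qed.

(* x |-> x + 1 permutes the classes, so the sum of (s_i + 1) - s_(succ i) is n. *)
Lemma index_in_ideal : A n%:R.
Proof.
have Zs1 (i : 'I_n) : inZl (s`_i + 1) by apply: inZl_add (s_int (ltn_ord i)) (inZl1 R).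
pose succ (i : 'I_n) : 'I_n := Ordinal (clsP (Zs1 i)).1.
have succ_inj : injective succ.
  move=> i j /(congr1 val) /= /(cls_eq (Zs1 i) (Zs1 j)) Aij.
  by apply/val_inj/(rep_inj (ltn_ord i) (ltn_ord j)); apply: ideal_eq Aij _; ring.
have -> : n%:R = \sum_(i < n) (s`_i + 1 - s`_(succ i)).
  by rewrite sumrB big_split /= (reindex_inj succ_inj) /= sumr_const card_ord; ring.
by apply: (ideal_sum A_ideal) => i; apply: (clsP (Zs1 i)).2.
Qed.

(* Z[lambda] / A is a quotient of Z[lambda] / m Z[lambda], whose m^2 elements are
   represented by the grid {i + j lambda | i, j < m}; translating the grid by a
   representative of a class maps the class of 0 onto that class. *)
Section Grid.
Variable m : nat.
Hypothesis m_gt0 : (0 < m)%N.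
Hypothesis A_m : A m%:R.

Definition grid (p : 'I_m * 'I_m) : R := p.1%:R + p.2%:R * lam.

Lemma grid_int p : inZl (grid p). Proof. by rewrite /grid; inZl_closure. Qed.

Definition grid_shift (a b : nat) (p : 'I_m * 'I_m) : 'I_m * 'I_m :=
  (Ordinal (ltn_pmod (p.1 + a) m_gt0), Ordinal (ltn_pmod (p.2 + b) m_gt0)).

Lemma grid_shift_inj a b : injective (grid_shift a b).
Proof.
move=> [i j] [i' j'] [] /eqP + /eqP; rewrite !eqn_modDr !modn_small ?ltn_ord //.
by move=> /eqP ei /eqP ej; congr pair; apply: val_inj.
Qed.

Lemma natr_modn_congr k : A ((k %% m)%:R - k%:R).
Proof.
apply: (ideal_mul_eq A_ideal (inZl_nat R (k %/ m)) (idealN A_ideal A_m)).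
by rewrite {3}(divn_eq k m) natrD natrM; ring.
Qed.

Lemma grid_shift_congr a b p :
  A (grid (grid_shift a b p) - (grid p + (a%:R + b%:R * lam))).
Proof.
apply: ideal_eq (idealD A_ideal (natr_modn_congr (p.1 + a))
  (idealMr A_ideal (inZl_lam R) (natr_modn_congr (p.2 + b)))) _.
by rewrite /grid /= !natrD; ring.
Qed.

Lemma zl_grid_congr x : exists a b : nat, A (zl R x - (a%:R + b%:R * lam)).
Proof.
have mod_nat (z : int) : exists k : nat, A (z%:~R - k%:R).
  exists (absz (z %% m%:Z)%Z).
  have -> : (absz (z %% m%:Z)%Z)%:R = (z %% m%:Z)%Z%:~R :> R.
    by rewrite natr_absz ger0_norm // modz_ge0 //; lia.
  apply: (ideal_mul_eq A_ideal (inZl_int R (z %/ m%:Z)%Z) A_m).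
  by rewrite {2}(divz_eq z m%:Z) intrD intrM; ring.
have [a Aa] := mod_nat x.1; have [b Ab] := mod_nat x.2.
exists a, b; apply: ideal_eq (idealD A_ideal Aa (idealMr A_ideal (inZl_lam R) Ab)) _.
by rewrite /zl; ring.
Qed.

Lemma dvdn_index_sqr : (n %| m * m)%N.
Proof.
pose g p : 'I_n := Ordinal (clsP (grid_int p)).1.
have g_eq p (k : 'I_n) : g p = k <-> A (grid p - s`_k).
  rewrite -(cls_eq (grid_int p) (s_int (ltn_ord k))) (cls_rep (ltn_ord k)).
  by split=> [/(congr1 val)|e] //; apply/val_inj/e.
pose o : 'I_m * 'I_m := (Ordinal m_gt0, Ordinal m_gt0).
have A_o : A (- s`_(g o)).
  by apply: ideal_eq ((g_eq o (g o)).1 erefl) _; rewrite /grid /=; ring.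
have fiber (k : 'I_n) : (\sum_(p | g p == k) 1 = \sum_(p | g p == g o) 1)%N.
  have /inZlP[x sk] := s_int (ltn_ord k).
  have [a [b Aab]] := zl_grid_congr x; rewrite -sk in Aab.
  rewrite (reindex_inj (@grid_shift_inj a b)); apply: eq_bigl => p.
  have Ashift := grid_shift_congr a b p.
  apply/eqP/eqP; rewrite !g_eq => Ap.
    apply: ideal_eq (idealD A_ideal (idealD A_ideal (idealB A_ideal Ap Ashift) Aab) A_o) _.
    by ring.
  apply: ideal_eq (idealB A_ideal (idealD A_ideal (idealB A_ideal Ap A_o) Ashift) Aab) _.
  by ring.
have -> : (m * m = \sum_(k < n) \sum_(p | g p == k) 1)%N.
  by rewrite -(@partition_big _ _ _ _ _ _ predT g predT) //= sum1_card card_prod card_ord.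
by rewrite (eq_bigr _ (fun k _ => fiber k)) sum_nat_const card_ord dvdn_mulr.
Qed.

End Grid.

(* N(c) = c * conj(c) is an integer in A, so p | n | N(c)^2, and p is inert. *)
Lemma ideal_sub_pZl (p : nat) : p \in [:: 2; 3]%N -> (p %| n)%N ->
  forall c, A (zl R c) -> zlmap intr c = 0 :> 'F_p * 'F_p.
Proof.
move=> p23 p_n c Ac.
have p_pr : prime p by move: p23; rewrite !inE => /orP[] /eqP ->.
have [/eqP|Nc_neq0] := eqVneq (zlnorm c) 0.
  by rewrite zlnorm_eq0 => /eqP ->; rewrite /zlmap /= rmorph0.
have A_Nc : A (absz (zlnorm c))%:R.
  have ANc : A (zlnorm c)%:~R.
    by rewrite -zl_norm; apply: (idealMr A_ideal) => //; apply: inZl_zl.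
  rewrite natr_absz; case: (ger0P (zlnorm c)) => _; first exact: ANc.
  by rewrite intrN; apply: (idealN A_ideal).
have p_Nc : (p %| absz (zlnorm c))%N.
  have : (p %| absz (zlnorm c) * absz (zlnorm c))%N.
    by apply: dvdn_trans p_n _; apply: dvdn_index_sqr A_Nc; rewrite absz_gt0.
  by rewrite Euclid_dvdM // orbb.
move: p_Nc; rewrite -[(p %| _)%N]/(p %| zlnorm c)%Z (dvdz_pcharf (pchar_Fp p_pr)).
by rewrite -zlnorm_map zlnorm_Fp_eq0 // => /eqP.
Qed.

Lemma index_not_dvd (p : nat) : p \in [:: 2; 3]%N -> reachable A (E12 1) -> ~~ (p %| n)%N.
Proof.
move=> p23 E12_reachable; apply/negP => p_n.
have [D D_separating] := H5_mod_separating_exists p23.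
apply: (E12_1_unreachable D_separating) E12_reachable.
exact: ideal_sub_pZl p23 p_n.
Qed.

End Index.

Lemma reduction_surjective_of_units (R : realType) (A : R -> Prop) (u v : int) :
  is_ideal A -> A (2 * u%:~R - 1) -> A (3 * v%:~R - 1) -> reduction_surjective A.
Proof.
move=> A_ideal Au Av M ZM detM; rewrite [M]mx2E.
apply: (reachable_SL2 A_ideal (reachable_E12_1 A_ideal Au Av)) (ZM 0 0) (ZM 0 1)
  (ZM 1 0) (ZM 1 1) _.
by move: detM; rewrite /congr_mod [M]mx2E det_mx2 !mxE.
Qed.

Lemma reachable_E12_1_of_surjective (R : realType) (A : R -> Prop) :
  is_ideal A -> reduction_surjective A -> reachable A (E12 1).
Proof.
move=> A_ideal; apply; first by apply: mx2_entry; inZl_closure.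
by rewrite /congr_mod det_mx2 !mulr1 mulr0 subr0 subrr; apply: ideal0.
Qed.

Theorem corollary6p1 (R : realType) (A : R -> Prop) (n : nat) :
  is_ideal A -> nonzero_ideal A -> abs_norm_is A n ->
  (reduction_surjective A <-> coprime n 6).
Proof.
move=> A_ideal _ [s [_ s_int s_incongr s_cover]].
have n_in_A := index_in_ideal A_ideal s_int s_incongr s_cover.
rewrite -[6%N]/(2 * 3)%N coprimeMr ![coprime n _]coprime_sym !prime_coprime //.
split=> [/(reachable_E12_1_of_surjective A_ideal) E12_reachable | /andP[n_odd n_3]].
  by apply/andP; split; apply: (index_not_dvd A_ideal s_int s_incongr s_cover).
have [u Au] : exists u : int, A (2 * u%:~R - 1).
  by apply: (unit_mod_of_coprime A_ideal n_in_A); rewrite prime_coprime.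
have [v Av] : exists v : int, A (3 * v%:~R - 1).
  by apply: (unit_mod_of_coprime A_ideal n_in_A); rewrite prime_coprime.
exact: reduction_surjective_of_units A_ideal Au Av.
Qed.
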